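(* Let $b_0=1$ and let $b_1,\dots,b_d$ be nonzero reals with $b_d>0$; put $a_k=b_k/|b_{k-1}|$. Then $$g_d(b_1,\dots,b_d)=f_d\Big(b_1,\frac{b_2}{b_1},\dots,\frac{b_d}{b_{d-1}}\Big)=\operatorname{sign}\Big(\prod_{i=1}^d b_i\Big)\sum_{s_1=1}^{\overline{a_1}}\ \sum_{s_2=1}^{\overline{a_2s_1}}\cdots\sum_{s_d=1}^{\overline{a_ds_{d-1}}}1,$$ where the sums are in the extended sense and $\overline{a_{i+1}s_i}$ means $a_{i+1}s_i$ if $a_{i+1}>0$ and $-a_{i+1}s_i-1$ if $a_{i+1}<0$ (similarly $\overline{a_1}=a_1$ or $-a_1-1$ according to the sign of $a_1$).
   Context: Let $B_k(x)$ be the Bernoulli polynomials ($te^{tx}/(e^t-1)=\sum_k B_k(x)t^k/k!$), $B_k=B_k(0)$, and $P_k(x)=(B_{k+1}(x+1)-B_{k+1})/(k+1)$. Extended sum: for a polynomial $h(s)=\sum_{k\ge0}h_ks^k$ (coefficients in a polynomial ring over $\mathbb R$) and upper limit $u$, $\sum_{s=1}^{u}h:=h_0u+\sum_{k\ge1}h_kP_k(u)$; this agrees with the usual sum for positive integers $u$. $f_d(a_1,\dots,a_d)=\sum_{s_1=1}^{a_1}\sum_{s_2=1}^{a_2s_1}\cdots\sum_{s_d=1}^{a_ds_{d-1}}1$, evaluated from the innermost sum outward with extended sums (a polynomial in $a_1,\dots,a_d$). With $b_0=1$, $g_d(b_1,\dots,b_d)=f_d(b_1/b_0,b_2/b_1,\dots,b_d/b_{d-1})$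 for nonzero reals $b_i$. *)

From HB Require Import structures.
From mathcomp Require Import all_boot all_order all_algebra.
Set Implicit Arguments. Unset Strict Implicit. Unset Printing Implicit Defensive.
Import Order.TTheory GRing.Theory Num.Theory.
Local Open Scope ring_scope.

Section Defs.
Variable R : realFieldType.

(* Bernoulli polynomials, defined by the generating function
   t e^{tx}/(e^t-1) = sum_k B_k(x) t^k/k!, i.e. (e^t - 1) * sum_k B_k(x) t^k/k! = t e^{tx}
   as formal power series in t.  Comparing coefficients of t^(m+1)/(m+1)! gives
   sum_{j <= m} C(m+1,j) B_j(x) = (m+1) x^m, which determines B_m(x) recursively. *)
Fixpoint bernoulli_seq (m : nat) : seq {poly R} :=
  match m with
  | 0 => [:: 1]
  | m'.+1 =>
      let s := bernoulli_seq m' in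
      rcons s ((m'.+2)%:R^-1 *:
                 ((m'.+2)%:R *: 'X^(m'.+1)
                  - \sum_(j < m'.+1) ('C(m'.+2, j))%:R *: s`_j))
  end.

Definition bernpoly (k : nat) : {poly R} := (bernoulli_seq k)`_k.

Definition bernnum (k : nat) : R := (bernpoly k).[0].

Definition Ppoly (k : nat) : {poly R} :=
  (k.+1)%:R^-1 *: ((bernpoly k.+1 \Po ('X + 1)) - (bernnum k.+1)%:P).

(* Extended sum  sum_{s=1}^{u} h := h_0 u + sum_{k>=1} h_k P_k(u),
   for a polynomial h(s) and an upper limit u which is itself a polynomial
   (in the variable of the enclosing sum). *)
Definition ext_sum (h u : {poly R}) : {poly R} :=
  h`_0 *: u + \sum_(1 <= k < size h) h`_k *: (Ppoly k \Po u).

(* Nested extended sum  sum_{s_1=1}^{u_1(s_0)} sum_{s_2=1}^{u_2(s_1)} ... 1,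
   evaluated from the innermost sum outward; the result is a polynomial in s_0. *)
Fixpoint nested_sum (us : seq {poly R}) : {poly R} :=
  if us is u :: us' then ext_sum (nested_sum us') u else 1.

(* f_d(a_1,...,a_d) (evaluated at real values of the a_i); upper limits
   a_1 (= a_1 s_0 with s_0 = 1), a_2 s_1, ..., a_d s_{d-1}. *)
Definition f_d (a : seq R) : R := (nested_sum [seq c *: 'X | c <- a]).[1].

(* g_d(b_1,...,b_d) = f_d(b_1/b_0, b_2/b_1, ..., b_d/b_{d-1}) with b_0 = 1
   (b 0 is required to be 1 in the theorem). *)
Definition g_d (d : nat) (b : nat -> R) : R :=
  f_d [seq b k.+1 / b k | k <- iota 0 d].

Definition bar_limit (a : R) : {poly R} :=
  if 0 < a then a *: 'X else - (a *: 'X) - 1.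

End Defs.

From HB Require Import structures.
From mathcomp Require Import all_boot all_order all_algebra.
From mathcomp Require Import ring.
Import Order.TTheory GRing.Theory Num.Theory.
Local Open Scope ring_scope.

(* The extended sum [ext_sum h u] is [indef_sum h \Po u], where [indef_sum h] is
   the unique polynomial S with S(x) - S(x - 1) = h(x) and S(0) = 0; this holds
   because the Bernoulli identity gives P_k(x) - P_k(x - 1) = x^k.  Uniqueness
   makes S linear and yields the reflection S(-x - 1) = - S'(x) - h(0), where S'
   sums h(-s).  So a sum of h(-s) up to a s with a < 0 equals minus the sum of
   h(s) up to -a s - 1, once h(0) = 0; and h(0) = 0 holds because b_d > 0 forces
   a further sum inside, and every extended sum vanishes at 0.  Peeling off the
   sums from the outside, these signs multiply to sign(b_1 ... b_d). *)

Section ExtendedSum.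
Variable R : realFieldType.
Implicit Types (h p q u : {poly R}) (c : R).

Lemma size_bernoulli_seq m : size (bernoulli_seq R m) = m.+1.
Proof. by elim: m => [|m IH] //=; rewrite size_rcons IH. Qed.

Lemma nth_bernoulli_seq m j : (j <= m)%N -> (bernoulli_seq R m)`_j = bernpoly R j.
Proof.
elim: m => [|m IH]; first by rewrite leqn0 => /eqP ->.
rewrite leq_eqVlt => /orP [/eqP -> //|lt_jm].
by rewrite /= nth_rcons size_bernoulli_seq lt_jm IH.
Qed.

Lemma bernpoly_recurrence m :
  \sum_(j < m.+1) 'C(m.+1, j)%:R *: bernpoly R j = (m.+1)%:R *: 'X^m.
Proof.
case: m => [|m]; first by rewrite big_ord1 /bernpoly /= scale1r.
rewrite big_ord_recr /= binSn.
have -> : bernpoly R m.+1 = (m.+2)%:R^-1 *: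
    ((m.+2)%:R *: 'X^(m.+1) - \sum_(j < m.+1) 'C(m.+2, j)%:R *: bernpoly R j).
  rewrite {1}/bernpoly /= nth_rcons size_bernoulli_seq ltnn eqxx.
  by congr (_ *: (_ - _)); apply: eq_bigr => j _; rewrite nth_bernoulli_seq // -ltnS.
by rewrite scalerA mulfV ?pnatr_eq0 // scale1r addrC subrK.
Qed.

(* The binomial transform is injective: its matrix is triangular with diagonal m + 1. *)
Lemma binomial_transform_inj (F G : nat -> {poly R}) :
  (forall m, \sum_(j < m.+1) 'C(m.+1, j)%:R *: F j
           = \sum_(j < m.+1) 'C(m.+1, j)%:R *: G j) -> F =1 G.
Proof.
move=> eqFG; elim/ltn_ind => n IH.
move: (eqFG n); rewrite !big_ord_recr /= (eq_bigr (fun j : 'I_n => 'C(n.+1, j)%:R *: G j)).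
  by move/addrI; rewrite binSn; apply: scalerI; rewrite pnatr_eq0.
by move=> j _; rewrite IH.
Qed.

Lemma bernpoly_shift n : bernpoly R n \Po ('X + 1) - bernpoly R n = n%:R *: 'X^(n.-1).
Proof.
apply: (@binomial_transform_inj (fun n => bernpoly R n \Po ('X + 1) - bernpoly R n)
                                 (fun n => n%:R *: 'X^(n.-1))) => m.
transitivity ((m.+1)%:R *: (('X + 1) ^+ m - 'X^m) : {poly R}).
  under eq_bigr do rewrite scalerBr -comp_polyZ.
  rewrite sumrB -raddf_sum bernpoly_recurrence /= comp_polyZ comp_Xn_poly.
  by rewrite scalerBr.
have := congr1 (@deriv R) (exprD1n ('X : {poly R}) m.+1).
rewrite deriv_exp derivD derivX derivC addr0 mul1r raddf_sum big_ord_recr /=.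
rewrite binn mulr1n /= derivXn /= => deriv_binom.
rewrite scalerBr !scaler_nat deriv_binom addrK; apply: eq_bigr => j _.
by rewrite derivMn derivXn !scaler_nat.
Qed.

Lemma Ppoly_backward_diff k : Ppoly R k - (Ppoly R k \Po ('X - 1)) = 'X^k.
Proof.
rewrite /Ppoly comp_polyZ comp_polyB comp_polyC -scalerBr -polyC1 comp_polyXaddC_K.
rewrite opprB addrA subrK polyC1 bernpoly_shift /=.
by rewrite scalerA mulVf ?pnatr_eq0 // scale1r.
Qed.

Lemma Ppoly_root0 k : (0 < k)%N -> (Ppoly R k).[0] = 0.
Proof.
move=> k_gt0; have := congr1 (horner^~ 0) (bernpoly_shift k.+1).
rewrite /= !hornerE horner_comp !hornerE expr0n /= -(prednK k_gt0) /= mulr0 => B0.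
by rewrite /bernnum B0 mulr0.
Qed.

(* p - q is invariant under x |-> x - 1, hence vanishes at every natural number. *)
Lemma backward_diff_inj p q :
  p - (p \Po ('X - 1)) = q - (q \Po ('X - 1)) -> p.[0] = q.[0] -> p = q.
Proof.
move=> eq_diff eq0; apply/eqP; rewrite -subr_eq0; apply/negPn/negP => nz_pq.
have shift_inv : (p - q) \Po ('X - 1) = p - q.
  apply/eqP; rewrite comp_polyB -subr_eq0; apply/eqP.
  transitivity (q - (q \Po ('X - 1)) - (p - (p \Po ('X - 1)))); first by ring.
  by rewrite eq_diff subrr.
have root_nat n : (p - q).[n%:R] = 0.
  elim: n => [|n IH]; first by rewrite hornerD hornerN eq0 subrr.
  have shift_nat : ('X - 1 : {poly R}).[n.+1%:R] = n%:R by rewrite !hornerE -natr1 addrK.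
  by rewrite -shift_inv horner_comp shift_nat.
suff : (size [seq (i%:R : R) | i <- iota 0 (size (p - q)%R)] < size (p - q)%R)%N.
  by rewrite size_map size_iota ltnn.
apply: (max_poly_roots nz_pq); first by apply/allP => x /mapP [i _ ->]; rewrite /root root_nat.
by rewrite map_inj_uniq ?iota_uniq // => i j /eqP; rewrite eqr_nat => /eqP.
Qed.

Definition indef_sum h := ext_sum h 'X.

Lemma ext_sumE h u : ext_sum h u = indef_sum h \Po u.
Proof.
rewrite /indef_sum /ext_sum comp_polyD comp_polyZ comp_polyX raddf_sum /=.
by congr (_ + _); apply: eq_bigr => k _; rewrite comp_polyZ comp_polyXr.
Qed.

Lemma indef_sum_backward_diff h : indef_sum h - (indef_sum h \Po ('X - 1)) = h.
Proof.
rewrite /indef_sum /ext_sum comp_polyD comp_polyZ comp_polyX raddf_sum /=.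
rewrite opprD addrACA -scalerBr opprB [X in h`_0 *: X]addrC subrK -sumrB.
under eq_bigr do rewrite comp_polyXr comp_polyZ -scalerBr Ppoly_backward_diff.
have [->|nz_h] := eqVneq h 0; first by rewrite size_poly0 big_geq // coef0 scale0r addr0.
rewrite -[RHS]coefK poly_def -(big_mkord xpredT (fun i => h`_i *: 'X^i)).
by rewrite (@big_ltn _ _ _ 0) ?size_poly_gt0.
Qed.

Lemma indef_sum0 h : (indef_sum h).[0] = 0.
Proof.
rewrite /indef_sum /ext_sum hornerD hornerZ hornerX mulr0 add0r horner_sum.
rewrite big_nat_cond big1 // => k /andP [/andP [k_gt0 _] _].
by rewrite hornerZ comp_polyXr Ppoly_root0 ?mulr0.
Qed.

Lemma indef_sumN1 h : (indef_sum h).[-1] = - h.[0].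
Proof.
have := congr1 (horner^~ 0) (indef_sum_backward_diff h).
have shift0 : ('X - 1 : {poly R}).[0] = -1 by rewrite !hornerE.
by rewrite /= hornerD hornerN horner_comp indef_sum0 shift0 sub0r => <-; rewrite opprK.
Qed.

Lemma indef_sumZ c h : indef_sum (c *: h) = c *: indef_sum h.
Proof.
apply: backward_diff_inj; last by rewrite hornerZ !indef_sum0 mulr0.
by rewrite indef_sum_backward_diff comp_polyZ -scalerBr indef_sum_backward_diff.
Qed.

Lemma indef_sum_reflect h :
  indef_sum h \Po (- 'X - 1) = - indef_sum (h \Po - 'X) - h.[0]%:P.
Proof.
apply: backward_diff_inj; last first.
  have reflect0 : (- 'X - 1 : {poly R}).[0] = -1 by rewrite !hornerE oppr0 sub0r.
  by rewrite horner_comp reflect0 indef_sumN1 hornerD !hornerN hornerC indef_sum0 oppr0 add0r.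
have reflect_shift : (- 'X - 1) \Po ('X - 1) = - 'X :> {poly R}.
  by rewrite comp_polyB raddfN /= comp_polyX -polyC1 comp_polyC polyC1; ring.
have shift_reflect : ('X - 1) \Po - 'X = - 'X - 1 :> {poly R}.
  by rewrite comp_polyB comp_polyX -polyC1 comp_polyC polyC1.
have := congr1 (comp_poly (- 'X)) (indef_sum_backward_diff h).
rewrite /= comp_polyB -comp_polyA shift_reflect -comp_polyA reflect_shift => diff_refl.
rewrite comp_polyB raddfN /= comp_polyC.
transitivity (- (h \Po - 'X)); first by rewrite -diff_refl; ring.
by rewrite -{1}(indef_sum_backward_diff (h \Po - 'X)); ring.
Qed.

Lemma ext_sumZ c h u : ext_sum (c *: h) u = c *: ext_sum h u.
Proof. by rewrite !ext_sumE indef_sumZ comp_polyZ. Qed.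

Lemma ext_sum_comp h u q : ext_sum h u \Po q = ext_sum h (u \Po q).
Proof. by rewrite !ext_sumE comp_polyA. Qed.

Lemma ext_sum_bar_limit c h : (c < 0 -> h.[0] = 0) ->
  ext_sum (h \Po (Num.sg c *: 'X)) (c *: 'X) = Num.sg c *: ext_sum h (bar_limit c).
Proof.
move=> h0; rewrite !ext_sumE; have [c_lt0|c_gt0|->] := ltrgtP c 0.
- rewrite ltr0_sg // !scaleN1r -[indef_sum _]opprK -[- indef_sum _]subr0 -polyC0.
  rewrite -(h0 c_lt0) -indef_sum_reflect raddfN /= -comp_polyA.
  by rewrite /bar_limit ltNge (ltW c_lt0) /= comp_polyB raddfN /= comp_polyX -polyC1 comp_polyC.
- by rewrite gtr0_sg // !scale1r comp_polyXr /bar_limit c_gt0.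
- by rewrite sgr0 !scale0r comp_poly0r -horner_coef0 indef_sum0.
Qed.

Lemma ext_sum_bar_limit_root0 c h : (c <= 0 -> h.[0] = 0) ->
  (ext_sum h (bar_limit c)).[0] = 0.
Proof.
rewrite ext_sumE horner_comp /bar_limit; case: ltP => [_ _|_ /(_ isT) h0].
  by rewrite hornerZ hornerX mulr0 indef_sum0.
have -> : (- (c *: 'X) - 1 : {poly R}).[0] = -1 by rewrite !hornerE oppr0 sub0r.
by rewrite -oppr0 -h0; apply: indef_sumN1.
Qed.

Lemma nested_sum_bar_limit_root0 (cs : seq R) : 0 < last 0 cs ->
  (nested_sum [seq bar_limit c | c <- cs]).[0] = 0.
Proof.
elim: cs => [|c cs IH] /=; first by rewrite ltxx.
case: cs IH => [_ c_gt0|c' cs IH last_gt0] /=; apply: ext_sum_bar_limit_root0.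
  by rewrite leNgt c_gt0.
by move=> _; apply: IH.
Qed.

Lemma mulr_sg_div_norm c c' : c' / `|c| * Num.sg c = c' / c.
Proof.
have [->|nz_c] := eqVneq c 0; first by rewrite sgr0 invr0 !mulr0.
by rewrite normrEsg; field; rewrite sgr_eq0 nz_c.
Qed.

Lemma sgr_div_norm c' c : c != 0 -> Num.sg (c' / `|c|) = Num.sg c'.
Proof. by move=> nz_c; rewrite sgrM sgrV sgr_norm nz_c mulr1. Qed.

Lemma nested_sum_ratios (b : nat -> R) j n :
  (forall i, (i <= n)%N -> b (j + i)%N != 0) -> 0 < b (j + n)%N ->
  nested_sum [seq (b k.+1 / b k) *: 'X | k <- iota j n] =
  Num.sg (\prod_(j.+1 <= i < (j + n)%N.+1) b i) *:
    (nested_sum [seq bar_limit (b k.+1 / `|b k|) | k <- iota j n] \Po (Num.sg (b j) *: 'X)).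
Proof.
elim: n j => [|n IH] j nz_b bn_gt0.
  by rewrite /= addn0 big_geq // sgr1 scale1r -polyC1 comp_polyC.
have nz_bj : b j != 0 by rewrite -[j]addn0 nz_b.
rewrite /= IH => [|i le_in|]; last 2 first.
- by rewrite addSnnS nz_b.
- by rewrite addSnnS.
set G := nested_sum _; set a := b j.+1 / `|b j|.
have ratio : (b j.+1 / b j) *: 'X = (a *: 'X) \Po (Num.sg (b j) *: 'X).
  by rewrite comp_polyZ comp_polyX scalerA mulr_sg_div_norm.
rewrite ext_sumZ ratio -ext_sum_comp -(sgr_div_norm (b j.+1) _ nz_bj).
rewrite ext_sum_bar_limit.
- rewrite comp_polyZ scalerA (sgr_div_norm _ _ nz_bj) -sgrM mulrC addSnnS -big_ltn //.
  by rewrite ltnS -addSnnS leq_addr.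
(* b (j + 1) < 0 < b (j + n + 1) forces n > 0, and the inner limits end with a
   positive ratio. *)
- rewrite pmulr_llt0 ?invr_gt0 ?normr_gt0 // => bj1_lt0.
  move: (nested_sum_bar_limit_root0 [seq b k.+1 / `|b k| | k <- iota j.+1 n]).
  rewrite -map_comp; apply.
  case: n {IH G} nz_b bn_gt0 => [|n] nz_b bn_gt0; first by rewrite addn1 ltNge ltW in bn_gt0.
  rewrite -[n.+1]addn1 iotaD map_cat last_cat /= addSnnS -addnS.
  by rewrite divr_gt0 // normr_gt0 nz_b.
Qed.

End ExtendedSum.

Theorem mainTheorem12 (R : realFieldType) (d : nat) (b : nat -> R)
  (hd : (0 < d)%N)
  (hb0 : b 0%N = 1)
  (hbnz : forall i : nat, (1 <= i <= d)%N -> b i != 0)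
  (hbd : 0 < b d) :
  g_d d b =
  Num.sg (\prod_(1 <= i < d.+1) b i) *
  (nested_sum [seq bar_limit (b k / `|b k.-1|) | k <- iota 1 d]).[1].
Proof.
have nz_b i : (i <= d)%N -> b (0 + i)%N != 0.
  by case: i => [|i] le_id; [rewrite hb0 oner_eq0 | apply: hbnz].
have limits_shift : [seq bar_limit (b k / `|b k.-1|) | k <- iota 1 d]
                  = [seq bar_limit (b k.+1 / `|b k|) | k <- iota 0 d].
  by rewrite -[1%N]addn0 iotaDl -map_comp.
rewrite /g_d /f_d -map_comp (@nested_sum_ratios R b 0 d nz_b) // limits_shift.
by rewrite hb0 sgr1 scale1r comp_polyXr hornerZ.
Qed.
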